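(* Let $\mathbb{X}$ be a $0$-dimensional Polish space, $(C^\varepsilon_i)_{(\varepsilon,i)\in2\times\omega}$ a comparing $1$-disjoint family of subsets of $\mathbb{X}$, $X$ a Polish space and $A\subseteq X\times X$ any relation. Then one of the following holds: (a) there is $c:X\to\omega$ with all $c^{-1}(\{n\})\in\mathbf{\Delta}^0_2(X)$ and $c(x)\neq c(y)$ for all $(x,y)\in A$; (b) there is a continuous $f:\mathbb{X}\to X$ with $(f(x),f(y))\in A$ for all $(x,y)\in\bigcup_iC^0_i\times C^1_i$.
   Context: A family $(C^\varepsilon_i)_{(\varepsilon,i)\in2\times\omega}$ of subsets of $\mathbb{X}$ is $1$-disjoint if its members are closed and pairwise disjoint. It is comparing if for each $q\in\omega$ there is a partition $(O^p_q)_{p\in\omega}$ of $\mathbb{X}$ into clopen sets such that for each $i$: if $q<i$ there is $p$ with $C^0_i\cup C^1_i\subseteq O^p_q$; and if $q\ge i$ then $C^\varepsilon_i\subseteq O^{2i+\varepsilon}_q$ for each $\varepsilon\in2$. *)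

From HB Require Import structures.
From mathcomp Require Import all_boot all_order all_algebra.
From mathcomp Require Import all_classical all_reals all_analysis.
From mathcomp Require Import Rstruct Rstruct_topology borel_hierarchy.
Set Implicit Arguments. Unset Strict Implicit. Unset Printing Implicit Defensive.
Import Order.TTheory GRing.Theory Num.Theory.
Import numFieldNormedType.Exports.
Local Open Scope classical_set_scope.
Local Open Scope ring_scope.

Definition is_metric (T : Type) (d : T -> T -> Rdefinitions.R) : Prop :=
  [/\ forall x y, 0 <= d x y,
      forall x y, d x y = 0 <-> x = y,
      forall x y, d x y = d y x &
      forall x y z, d x z <= d x y + d y z].

Definition metric_compatible (T : topologicalType) (d : T -> T -> Rdefinitions.R) :=
  forall U : set T,
    open U <-> (forall x, U x -> exists2 e : Rdefinitions.R, 0 < e &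
                                  [set y | d x y < e] `<=` U).

Definition metric_complete (T : topologicalType) (d : T -> T -> Rdefinitions.R) :=
  forall u : nat -> T,
    (forall e : Rdefinitions.R, 0 < e ->
       exists N : nat, forall m n : nat, (N <= m)%N -> (N <= n)%N -> d (u m) (u n) < e) ->
    exists x : T, u @ \oo --> x.

Definition completely_metrizable (T : topologicalType) : Prop :=
  exists d : T -> T -> Rdefinitions.R,
    [/\ is_metric d, metric_compatible d & metric_complete d].

Definition separable_space (T : topologicalType) : Prop :=
  exists D : set T, countable D /\ dense D.

Definition polish (T : topologicalType) : Prop :=
  separable_space T /\ completely_metrizable T.

Definition zero_dim (T : topologicalType) : Prop :=
  forall (U : set T) (x : T), open U -> U x ->
    exists V : set T, [/\ clopen V, V x & V `<=` U].

Definition Delta02 (T : topologicalType) (S : set T) : Prop :=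
  Fsigma S /\ Gdelta S.

(* A family (C^eps_i) indexed by 2 x omega; eps = 0 is [false], eps = 1 is [true]. *)
Definition one_disjoint (T : topologicalType) (C : bool -> nat -> set T) : Prop :=
  (forall e i, closed (C e i)) /\
  (forall e i e' i', (e, i) <> (e', i') -> C e i `&` C e' i' = set0).

Definition clopen_partition (T : topologicalType) (O : nat -> set T) : Prop :=
  [/\ forall p, clopen (O p),
      forall p p', p <> p' -> O p `&` O p' = set0 &
      \bigcup_p O p = [set: T]].

Definition comparing (T : topologicalType) (C : bool -> nat -> set T) : Prop :=
  forall q : nat, exists O : nat -> set T,
    clopen_partition O /\
    forall i : nat,
      ((q < i)%N -> exists p, C false i `|` C true i `<=` O p) /\
      ((i <= q)%N -> forall e : bool, C e i `<=` O (2 * i + e)%N).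

From HB Require Import structures.
From mathcomp Require Import all_boot all_order all_algebra.
From mathcomp Require Import all_classical all_reals all_analysis.
From mathcomp Require Import Rstruct Rstruct_topology borel_hierarchy ring lra.

(* A closed set F is colorable off when A, restricted to the complement of F,
   has an omega-colouring whose classes are Delta^0_2 there.  Such sets are
   stable under countable intersections and under removing an open set B for
   which F `&` B contains no A-edge.  Intersecting over a countable base yields
   such a K in which every point is a limit of A-edges of K.  If K is empty
   this is (a).  Otherwise move a point through K along the comparing
   partitions: at stage n the pieces O^{2n}_n and O^{2n+1}_n jump to the two
   endpoints of a 2^-(n+1)-close A-edge and all other pieces stay put.  Stage n
   depends only on clopen pieces, so the limit map is continuous, and a pair in
   C^0_i x C^1_i follows one path up to stage i, then splits along an A-edge
   and freezes. *)

Import Order.TTheory GRing.Theory Num.Theory.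
Local Open Scope classical_set_scope.
Local Open Scope ring_scope.
Set Implicit Arguments.
Unset Strict Implicit.

Local Notation R := Rdefinitions.R.

Definition half_pow (n : nat) : R := (2 ^+ n)^-1.

Lemma half_pow_gt0 n : 0 < half_pow n.
Proof. by rewrite invr_gt0 exprn_gt0. Qed.

Lemma half_powS n : half_pow n.+1 + half_pow n.+1 = half_pow n.
Proof.
have : (2 ^+ n : R) != 0 by rewrite expf_neq0.
by rewrite /half_pow exprS => ?; field.
Qed.

Lemma half_pow_le m n : (m <= n)%N -> half_pow n <= half_pow m.
Proof.
move=> mn; rewrite lef_pV2 ?posrE ?exprn_gt0 //.
by rewrite ler_eXn2l // ltr1n.
Qed.

Lemma half_pow_small (e : R) : 0 < e -> exists n, half_pow n < e.
Proof.
move=> e0; exists (Num.truncn e^-1).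
rewrite /half_pow invf_plt ?posrE ?exprn_gt0 //.
apply: (lt_le_trans (truncnS_gt _)).
by rewrite -natrX ler_nat ltn_expl.
Qed.

Lemma Fsigma_setI_closed (T : topologicalType) (S F : set T) :
  Fsigma S -> closed F -> Fsigma (S `&` F).
Proof.
move=> [G cG ->] cF; exists (fun i => G i `&` F) => [i|]; first exact: closedI.
by rewrite setI_bigcupl.
Qed.

Lemma Gdelta_setI (T : topologicalType) (S S' : set T) :
  Gdelta S -> Gdelta S' -> Gdelta (S `&` S').
Proof.
move=> [G oG ->] [G' oG' ->]; exists (fun i => G i `&` G' i) => [i|].
  exact: openI.
by rewrite bigcapI.
Qed.

Definition colorable_off (X : topologicalType) (A : set (X * X)) (F : set X) :=
  closed F /\ exists c : X -> nat,
    (forall n, Delta02 (c @^-1` [set n] `\` F)) /\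
    (forall x y, A (x, y) -> ~ F x -> ~ F y -> c x <> c y).

Definition edge_perfect (X : Type) (d : X -> X -> R) (A : set (X * X)) (K : set X) :=
  forall z, K z -> forall e, 0 < e ->
    exists a b, [/\ K a, K b, d z a < e, d z b < e & A (a, b)].

Lemma edge_perfect_choice (X : Type) (d : X -> X -> R) (A : set (X * X)) (K : set X) :
  edge_perfect d A K -> exists s : X -> nat -> X * X, forall z n, K z ->
    [/\ K (s z n).1, K (s z n).2, d z (s z n).1 < half_pow n.+1,
        d z (s z n).2 < half_pow n.+1 & A (s z n)].
Proof.
move=> K_perf; have /choice[s s_spec] : forall z, exists s : nat -> X * X, forall n,
    K z -> [/\ K (s n).1, K (s n).2, d z (s n).1 < half_pow n.+1,
                d z (s n).2 < half_pow n.+1 & A (s n)].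
  move=> z; have [Kz|nKz] := pselect (K z); last by exists (fun=> (z, z)) => n /nKz.
  have [s hs] := choice (fun n => K_perf z Kz _ (half_pow_gt0 n.+1)).
  have [t ht] := choice (fun n => hs n).
  by exists (fun n => (s n, t n)) => n _; have [? ? ? ? ?] := ht n.
by exists s.
Qed.

Lemma Delta02_set0 (T : topologicalType) : Delta02 (@set0 T).
Proof. by split; [exact: closed_Fsigma closed0|exact: open_Gdelta open0]. Qed.

Lemma colorable_offT (X : topologicalType) (A : set (X * X)) : colorable_off A setT.
Proof.
split; first exact: closedT.
by exists (fun=> 0%N); split=> [n|x y _ /(_ I)//]; rewrite setDT; exact: Delta02_set0.
Qed.

Lemma first_exit (T : Type) (F : nat -> set T) (x : T) : ~ (\bigcap_k F k) x ->
  exists k, ~ F k x /\ forall l, (l < k)%N -> F l x.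
Proof.
move=> nFx; have /ex_minnP[k /asboolPn nFk k_min] : exists k, ~~ `[< F k x >].
  apply: contrapT => h; apply: nFx => k _; apply: contrapT => nFk.
  by apply: h; exists k; exact/asboolPn.
exists k; split=> // l lk; apply: contrapT => /asboolPn /k_min.
by rewrite leqNgt lk.
Qed.

Section Metric.
Context {X : topologicalType} {d : X -> X -> R}.
Hypotheses (md : is_metric d) (cd : metric_compatible d) (cc : metric_complete d).

Lemma dist_refl x : d x x = 0.
Proof. by case: md => _ dE _ _; apply/dE. Qed.

Lemma open_ball x r : open [set y | d x y < r].
Proof.
case: md => _ _ _ dT; apply/cd => y /= dxy.
exists (r - d x y); first by rewrite subr_gt0.
by move=> z /= dyz; have := dT x y z; lra.
Qed.

Lemma nbhs_ball x r : 0 < r -> nbhs x [set y | d x y < r].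
Proof.
by move=> r0; apply: open_nbhs_nbhs; split; [exact: open_ball|rewrite /= dist_refl].
Qed.

Lemma cvg_dist u l : u @ \oo --> l ->
  forall e, 0 < e -> exists N, forall n, (N <= n)%N -> d l (u n) < e.
Proof. by move=> ul e e0; have [N _ hN] := ul _ (nbhs_ball l e0); exists N. Qed.

Lemma dist_limit_le a u l r : u @ \oo --> l ->
  (exists N, forall n, (N <= n)%N -> d a (u n) <= r) -> d a l <= r.
Proof.
case: md => _ _ dC dT ul [N hN]; apply/ler_addgt0Pr => e e0.
have [M hM] := cvg_dist ul e0.
have := hN (maxn N M) (leq_maxl _ _); have := hM (maxn N M) (leq_maxr _ _).
by have := dT a (u (maxn N M)) l; rewrite (dC (u _) l); lra.
Qed.

Lemma closed_Gdelta (F : set X) : closed F -> Gdelta F.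
Proof.
case: md => _ _ dC dT cF.
exists (fun n => [set x | exists2 y, F y & d y x < half_pow n]).
  move=> n; apply/cd => x [y Fy dyx].
  exists (half_pow n - d y x); first by rewrite subr_gt0.
  by move=> z /= dxz; exists y => //; have := dT y x z; lra.
apply/seteqP; split=> [x Fx n _|x Fx].
  by exists x; rewrite ?dist_refl ?half_pow_gt0.
rewrite (closure_id F).1 // => B; rewrite nbhsE => -[U [oU Ux] UB].
have [e e0 eU] := (cd U).1 oU x Ux; have [n ne] := half_pow_small e0.
have [y Fy dyx] := Fx n I; exists y; split => //; apply/UB/eU => /=.
by rewrite dC; lra.
Qed.

Lemma open_Fsigma (U : set X) : open U -> Fsigma U.
Proof.
move=> oU; have [G oG eG] := closed_Gdelta (open_closedC oU).
exists (fun n => ~` G n) => [n|]; first exact: open_closedC.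
by rewrite -setC_bigcap -eG setCK.
Qed.

Lemma separable_ball_base : separable_space X ->
  exists B : nat -> set X, (forall k, open (B k)) /\
    forall z e, 0 < e -> exists k, B k z /\ B k `<=` [set w | d z w < e].
Proof.
case: md => _ _ dC dT [D [/countable_injP[g g_inj] dD]].
pose B k : set X := if pickle_inv k is Some (j, m)
  then \bigcup_(y in [set y | D y /\ g y = j]) [set w | d y w < half_pow m]
  else set0.
exists B; split=> [k|z e e0].
  rewrite /B; case: (pickle_inv k : option (nat * nat)) => [[j m]|]; last exact: open0.
  by apply: bigcup_open => y _; exact: open_ball.
have [n ne] : exists n, half_pow n < e / 2 by apply: half_pow_small; lra.
have [y [dzy Dy]] : [set w | d z w < half_pow n] `&` D !=set0.
  by apply: dD; [exists z; rewrite /= dist_refl half_pow_gt0|exact: open_ball].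
exists (pickle (g y, n)); rewrite /B pickleK_inv; split.
  by exists y => //=; rewrite dC.
move=> w [y' [Dy' /g_inj ey'] dyw]; rewrite ey' ?inE // in dyw.
by have := dT z y w; rewrite /= in dzy dyw *; lra.
Qed.

Lemma open_Delta02 (U : set X) : open U -> Delta02 U.
Proof. by move=> oU; split; [exact: open_Fsigma|exact: open_Gdelta]. Qed.

Lemma Delta02_setI_closed (S F : set X) : Delta02 S -> closed F -> Delta02 (S `&` F).
Proof.
move=> [FS GS] cF; split; first exact: Fsigma_setI_closed.
by apply: Gdelta_setI => //; exact: closed_Gdelta.
Qed.

Lemma geometric_cvg u : (forall n, d (u n) (u n.+1) <= half_pow n.+1) ->
  exists l, forall n, d (u n) l <= half_pow n.
Proof.
case: md => _ _ dC dT du.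
have du_far n j : d (u n) (u (n + j)%N) <= half_pow n - half_pow (n + j).
  elim: j => [|j IH]; first by rewrite addn0 dist_refl // subrr.
  have := dT (u n) (u (n + j)%N) (u (n + j).+1); have := du (n + j)%N.
  by have := half_powS (n + j); rewrite addnS; lra.
have du_tail n m : (n <= m)%N -> d (u n) (u m) <= half_pow n.
  move=> /subnKC <-; have := du_far n (m - n)%N.
  by have := half_pow_gt0 (n + (m - n)); lra.
have u_cauchy e : 0 < e -> exists N, forall m n,
    (N <= m)%N -> (N <= n)%N -> d (u m) (u n) < e.
  move=> e0; have [N hN] : exists N, half_pow N < e / 2.
    by apply: half_pow_small; lra.
  exists N => m n Nm Nn; have := du_tail N m Nm; have := du_tail N n Nn.
  by have := dT (u m) (u N) (u n); rewrite (dC (u m) (u N)); lra.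
have [l ul] := cc u_cauchy.
by exists l => n; apply: dist_limit_le ul _; exists n; exact: du_tail.
Qed.

Lemma eventually_const_limit u a l N : (forall n, d (u n) l <= half_pow n) ->
  (forall n, (N <= n)%N -> u n = a) -> a = l.
Proof.
case: md => d0 dE _ _ ul ua; apply/dE/eqP; rewrite eq_le d0 andbT.
apply/ler_addgt0Pr => e e0; rewrite add0r; have [n ne] := half_pow_small e0.
have := ul (N + n)%N; rewrite ua ?leq_addr //; have := half_pow_le (leq_addl N n).
lra.
Qed.

Variable A : set (X * X).

Lemma colorable_off_setD (K B : set X) : colorable_off A K -> open B ->
  (forall x y, K x -> K y -> B x -> B y -> ~ A (x, y)) -> colorable_off A (K `\` B).
Proof.
move=> [cK [c [c_D02 c_col]]] oB KB_indep.
split; first exact: closedI cK (open_closedC oB).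
pose c' x := if `[< K x >] then 0%N else (c x).+1.
exists c'; split=> [[|n]|x y Axy nKBx nKBy].
- have -> : c' @^-1` [set 0%N] `\` (K `\` B) = B `&` K.
    apply/seteqP; split=> x /=; rewrite /c'; case: asboolP => Kx.
    + by move=> [_ nKBx]; split=> //; apply: contrapT => nBx; exact: nKBx.
    + by case.
    + by move=> [Bx _]; split=> // -[].
    + by case=> _ /Kx.
  by apply: Delta02_setI_closed => //; exact: open_Delta02.
- have -> : c' @^-1` [set n.+1] `\` (K `\` B) = c @^-1` [set n] `\` K.
    apply/seteqP; split=> x /=; rewrite /c'; case: asboolP => Kx.
    + by case.
    + by move=> [[->] _].
    + by move=> [_ /(_ Kx)].
    + by move=> [-> _]; split=> // -[].
  exact: c_D02.
- have inB z : K z -> ~ (K `\` B) z -> B z.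
    by move=> Kz nKBz; apply: contrapT => nBz; exact: nKBz.
  rewrite /c'; case: asboolP => Kx; case: asboolP => Ky //.
    by move=> _; exact: KB_indep Kx Ky (inB x Kx nKBx) (inB y Ky nKBy) Axy.
  by move=> [] /(c_col x y Axy Kx Ky).
Qed.

Lemma colorable_off_bigcap (F : nat -> set X) : (forall k, colorable_off A (F k)) ->
  colorable_off A (\bigcap_k F k).
Proof.
move=> F_col; have F_closed k : closed (F k) by case: (F_col k).
split; first by apply: closed_bigI => k _.
have /choice[c c_spec] := fun k => (F_col k).2.
have /choice[k k_spec] : forall x, exists k, ~ (\bigcap_k F k) x ->
    ~ F k x /\ forall l, (l < k)%N -> F l x.
  move=> x; have [Fx|nFx] := pselect ((\bigcap_k F k) x); first by exists 0%N.
  by have [k hk] := first_exit nFx; exists k.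
have k_eq x j : ~ F j x -> (forall l, (l < j)%N -> F l x) -> k x = j.
  move=> nFj Fl; have nFx : ~ (\bigcap_k F k) x by move/(_ j I).
  have [nFk Fl'] := k_spec x nFx.
  by case: (ltngtP (k x) j) => // [/Fl|/Fl'].
pose c' x := pickle (k x, c (k x) x).
exists c'; split=> [m|x y Axy nFx nFy].
  case E : (pickle_inv m : option (nat * nat)) => [[j n]|]; last first.
    have -> // : c' @^-1` [set m] `\` \bigcap_k F k = set0.
    - by apply/seteqP; split=> x // [cxm _]; move: E; rewrite -cxm pickleK_inv.
    - exact: Delta02_set0.
  have -> : c' @^-1` [set m] `\` \bigcap_k F k =
      (c j @^-1` [set n] `\` F j) `&` \bigcap_(l in [set l | (l < j)%N]) F l.
    apply/seteqP; split=> x /=.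
      move=> [cxm nFx]; have [nFk Fl] := k_spec x nFx.
      by move: E; rewrite -cxm pickleK_inv => -[<- <-].
    move=> [[cxn nFj] Fl]; split; last by move/(_ j I).
    rewrite /c' (k_eq x j nFj Fl) cxn.
    by have := @pickle_invK (nat * nat)%type m; rewrite E.
  apply: Delta02_setI_closed; first exact: (c_spec j).1.
  by apply: closed_bigI => l _.
rewrite /c' => /(pcan_inj pickleK)[kxy cxy].
have [nFkx _] := k_spec x nFx; have [nFky _] := k_spec y nFy.
rewrite -kxy in nFky cxy.
exact: (c_spec (k x)).2 x y Axy nFkx nFky cxy.
Qed.

Lemma colorable_edge_perfect_kernel : separable_space X ->
  exists K, colorable_off A K /\ edge_perfect d A K.
Proof.
move=> sepX; have [B [oB B_base]] := separable_ball_base sepX.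
have /choice[F F_spec] : forall k, exists F, colorable_off A F /\
    ((exists2 G, colorable_off A G & B k `<=` ~` G) -> B k `<=` ~` F).
  move=> k; have [[G G_col BG]|noG] :=
    pselect (exists2 G, colorable_off A G & B k `<=` ~` G); first by exists G.
  by exists setT; split=> [|/noG//]; exact: colorable_offT.
pose K := \bigcap_k F k.
have K_col : colorable_off A K by apply: colorable_off_bigcap => k; case: (F_spec k).
exists K; split=> // z Kz e e0; apply: contrapT => no_edge.
have [k [Bz Be]] := B_base z e e0.
suff : B k `<=` ~` F k by move/(_ z Bz); apply; exact: Kz.
apply: (F_spec k).2; exists (K `\` B k); last by move=> w Bw [].
apply: colorable_off_setD => // x y Kx Ky Bx By Axy.
by apply: no_edge; exists x, y; split=> //; exact: Be.
Qed.

End Metric.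

Definition part_index (T : Type) (O : nat -> set T) (x : T) : nat :=
  xget 0%N [set p | O p x].

Section PartitionIndex.
Context {T : topologicalType} {O : nat -> set T}.
Hypothesis O_part : clopen_partition O.

Lemma part_indexP x : O (part_index O x) x.
Proof.
apply: (@xgetPex _ 0%N [set p | O p x]); case: O_part => _ _ O_cover.
by have : [set: T] x by []; rewrite -O_cover => -[p _ Opx]; exists p.
Qed.

Lemma part_index_eq x p : O p x -> part_index O x = p.
Proof.
move=> Opx; apply: contrapT => neq; case: O_part => _ O_disj _.
by have /seteqP[/(_ x (conj (part_indexP x) Opx))] := O_disj _ _ neq.
Qed.

Lemma nbhs_part_index x : nbhs x [set y | part_index O y = part_index O x].
Proof.
apply: (@filterS _ _ _ (O (part_index O x))) => [y /part_index_eq //|].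
apply: open_nbhs_nbhs; split; last exact: part_indexP.
by case: O_part => /(_ (part_index O x))[].
Qed.

End PartitionIndex.

Section ComparingIndex.
Context {T : topologicalType} {C : bool -> nat -> set T} {O : nat -> nat -> set T}.
Hypothesis O_part : forall q, clopen_partition (O q).
Hypothesis O_cmp : forall q i,
  ((q < i)%N -> exists p, C false i `|` C true i `<=` O q p) /\
  ((i <= q)%N -> forall e : bool, C e i `<=` O q (2 * i + e)%N).

Lemma part_index_below i q x y : C false i x -> C true i y -> (q < i)%N ->
  part_index (O q) x = part_index (O q) y.
Proof.
move=> Cx Cy qi; have [p Op] := (O_cmp q i).1 qi.
by rewrite !(part_index_eq (O_part q) (Op _ _)) //; [right|left].
Qed.

Lemma part_index_above i q e x : C e i x -> (i <= q)%N ->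
  part_index (O q) x = (2 * i + e)%N.
Proof. by move=> Cx iq; apply: part_index_eq => //; exact: (O_cmp q i).2. Qed.

End ComparingIndex.

Fixpoint fusion_path (T X : Type) (addr : nat -> T -> nat) (step : nat -> nat -> X -> X)
    (z0 : X) (x : T) (n : nat) : X :=
  if n is m.+1 then step m (addr m x) (fusion_path addr step z0 x m) else z0.

Section Fusion.
Context {T X : topologicalType} {d : X -> X -> R}.
Hypotheses (md : is_metric d) (cd : metric_compatible d) (cc : metric_complete d).
Context {addr : nat -> T -> nat} {step : nat -> nat -> X -> X} {K : set X} {z0 : X}.
Hypothesis nbhs_addr : forall q x, nbhs x [set y | addr q y = addr q x].
Hypothesis K_z0 : K z0.
Hypothesis step_K : forall n p z,
  K z -> K (step n p z) /\ d z (step n p z) <= half_pow n.+1.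

Local Notation path := (fusion_path addr step z0).

Lemma fusion_path_in x n : K (path x n).
Proof. by elim: n => //= n IH; case: (step_K n (addr n x) IH). Qed.

Lemma fusion_path_agree x y n : (forall q, (q < n)%N -> addr q y = addr q x) ->
  path y n = path x n.
Proof.
elim: n => //= n IH agree.
by rewrite IH ?agree // => q qn; apply: agree; exact: ltnW.
Qed.

Lemma fusion_limit : exists f : T -> X,
  continuous f /\ forall x n, d (path x n) (f x) <= half_pow n.
Proof.
have /choice[f f_lim] : forall x, exists l, forall n, d (path x n) l <= half_pow n.
  move=> x; apply: geometric_cvg => // n.
  exact: (step_K _ _ (fusion_path_in x n)).2.
exists f; split=> // x U; rewrite nbhsE => -[B [oB Bfx] BU].
have [e e0 eB] := (cd B).1 oB (f x) Bfx.
have [n ne] : exists n, half_pow n < e / 2 by apply: half_pow_small; lra.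
have : \forall y \near x, forall q : 'I_n, addr q y = addr q x.
  by apply: filter_forall => q; exact: nbhs_addr.
apply: filterS => y agree; apply/BU/eB => /=.
have fy := f_lim y n.
rewrite (fusion_path_agree (fun q (qn : (q < n)%N) => agree (Ordinal qn))) in fy.
case: md => _ _ dC dT; have := f_lim x n.
by have := dT (f x) (path x n) (f y); rewrite (dC (f x) (path x n)); lra.
Qed.

End Fusion.

Lemma half_double_bit i (e : bool) : (2 * i + e)./2 = i.
Proof. by rewrite addnC mul2n half_bit_double. Qed.

Lemma odd_double_bit i (e : bool) : odd (2 * i + e) = e.
Proof. by rewrite oddD mul2n odd_double; case: e. Qed.

Lemma edge_perfect_embedding (T X : topologicalType) (d : X -> X -> R)
    (A : set (X * X)) (K : set X) (C : bool -> nat -> set T) (z0 : X) :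
  is_metric d -> metric_compatible d -> metric_complete d ->
  edge_perfect d A K -> K z0 -> comparing C ->
  exists f : T -> X, continuous f /\
    forall i x y, C false i x -> C true i y -> A (f x, f y).
Proof.
move=> md cd cc K_perf Kz0 /choice [Op Op_spec].
have Op_part q : clopen_partition (Op q) := (Op_spec q).1.
have Op_cmp q i := (Op_spec q).2 i.
have [s s_spec] := edge_perfect_choice K_perf.
(* [p./2] and [odd p] decode the index [2 i + e] of [comparing]. *)
pose step n p z := if p./2 == n then if odd p then (s z n).2 else (s z n).1 else z.
have step_K n p z : K z -> K (step n p z) /\ d z (step n p z) <= half_pow n.+1.
  move=> Kz; have [Ka Kb da db _] := s_spec z n Kz; rewrite /step.
  case: ifP => _; [case: ifP => _|]; split=> //; try exact: ltW.
  by rewrite dist_refl // ltW // half_pow_gt0.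
pose addr q x := part_index (Op q) x.
have nbhs_addr q x : nbhs x [set y | addr q y = addr q x].
  exact: nbhs_part_index (Op_part q) x.
have [f [f_cont f_lim]] := fusion_limit md cd cc nbhs_addr Kz0 step_K.
exists f; split=> // i x y Cx Cy.
set z := fusion_path addr step z0 x i.
have zy : fusion_path addr step z0 y i = z.
  apply: fusion_path_agree => q qi; apply/esym.
  by rewrite /addr (part_index_below Op_part Op_cmp Cx Cy qi).
have after_i e v : C e i v -> fusion_path addr step z0 v i = z ->
    forall n, (i < n)%N ->
    fusion_path addr step z0 v n = if e then (s z i).2 else (s z i).1.
  move=> Cv vz; elim=> // n IH; rewrite ltnS leq_eqVlt => /orP[/eqP <-|ni] /=.
    by rewrite vz /addr (part_index_above Op_part Op_cmp Cv (leqnn i)) /step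
      half_double_bit odd_double_bit eqxx.
  rewrite IH // /addr (part_index_above Op_part Op_cmp Cv (ltnW ni)) /step.
  by rewrite half_double_bit (ltn_eqF ni).
have [_ _ _ _ Aab] := s_spec z i (fusion_path_in Kz0 step_K x i).
rewrite -(eventually_const_limit md (f_lim x) (after_i false x Cx erefl)).
rewrite -(eventually_const_limit md (f_lim y) (after_i true y Cy zy)).
by case: (s z i) Aab.
Qed.

Unset Implicit Arguments.

Theorem lemma4p4 (XX : topologicalType) (C : bool -> nat -> set XX)
  (X : topologicalType) (A : set (X * X)) :
  zero_dim XX -> polish XX -> comparing C -> one_disjoint C ->
  polish X ->
  (exists c : X -> nat,
      (forall n : nat, Delta02 (c @^-1` [set n])) /\
      (forall x y : X, A (x, y) -> c x <> c y))
  \/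
  (exists f : XX -> X,
      continuous f /\
      (forall (i : nat) (x y : XX), C false i x -> C true i y -> A (f x, f y))).
Proof.
move=> _ _ C_cmp _ [sepX [d [md cd cc]]].
have [K [[_ [c [c_D02 c_col]]] K_perf]] := colorable_edge_perfect_kernel md cd A sepX.
have [[z0 Kz0]|K0] := pselect (K !=set0).
  by right; exact: edge_perfect_embedding md cd cc K_perf Kz0 C_cmp.
have {}K0 : K = set0 by apply/seteqP; split=> // z Kz; apply: K0; exists z.
left; exists c; split=> [n|x y Axy]; first by rewrite -(setD0 (_ @^-1` _)) -K0.
by apply: c_col => //; rewrite K0.
Qed.
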